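(* Let $\mathcal P$, $\widehat U=(\widehat h,\widehat{q^x},\widehat{q^y})$, $\widehat B$, $\widehat u,\widehat v$ and the stochastic Galerkin shallow water system be as in the context. Define $$E(\widehat U)=\tfrac12\big((\widehat{q^x})^\top\widehat u+(\widehat{q^y})^\top\widehat v\big)+\tfrac12 g\|\widehat h\|^2+g\,\widehat h^\top\widehat B,$$ $$H(\widehat U)=\tfrac12\big(\widehat u^\top\mathcal P(\widehat{q^x})\widehat u+\widehat v^\top\mathcal P(\widehat{q^x})\widehat v\big)+g(\widehat{q^x})^\top(\widehat h+\widehat B),$$ $$K(\widehat U)=\tfrac12\big(\widehat v^\top\mathcal P(\widehat{q^y})\widehat v+\widehat u^\top\mathcal P(\widehat{q^y})\widehat u\big)+g(\widehat{q^y})^\top(\widehat h+\widehat B).$$ If $\mathcal P(\widehat h)$ is strictly positive definite, then $(E,H,K)$ is an entropy flux pair for the stochastic Galerkin shallow water system, i.e. $E$ is convex in $\widehat U$ and every smooth solution satisfies $E(\widehat U)_t+H(\widehat U)_x+K(\widehat U)_y=0$.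
   Context: Let $\xi$ be a random variable in $\mathbb R^d$ with density $\rho$ having finite moments of all orders, and let $\phi_1\equiv1,\phi_2,\dots,\phi_K$ be polynomials orthonormal in $L^2_\rho$. For $k=1,\dots,K$ let $\mathcal M_k\in\mathbb R^{K\times K}$ with $(\mathcal M_k)_{l,m}=\int\phi_k\phi_l\phi_m\rho$, and for $\widehat z\in\mathbb R^K$ set $\mathcal P(\widehat z)=\sum_{k=1}^K\widehat z_k\mathcal M_k$ (a symmetric matrix). Let $g>0$. The stochastic Galerkin (SG) shallow water system is $\widehat U_t+\widehat F(\widehat U)_x+\widehat G(\widehat U)_y=\widehat S(\widehat U)$ for $\widehat U(x,y,t)=(\widehat h^\top,(\widehat{q^x})^\top,(\widehat{q^y})^\top)^\top\in\mathbb R^{3K}$, with a time-independent bottom coefficient vector $\widehat B(x,y)\in\mathbb R^K$, where $\widehat F(\widehat U)=\big(\widehat{q^x};\ \mathcal P(\widehat{q^x})\mathcal P^{-1}(\widehat h)\widehat{q^x}+\tfrac12 g\mathcal P(\widehat h)\widehat h;\ \mathcal P(\widehat{q^x})\mathcal P^{-1}(\widehat h)\widehat{q^y}\big)$, $\widehat G(\widehat U)=\big(\widehat{q^y};\ \mathcal P(\widehat{q^y})\mathcal P^{-1}(\widehat h)\widehat{q^x};\ \mathcal P(\widehat{q^y})\mathcal P^{-1}(\widehat h)\widehat{q^y}+\tfrac12 g\mathcal P(\widehat h)\widehat h\big)$, $\widehat S(\widehat U)=\big(0;\ -g\mathcal P(\widehat h)\widehat B_x;\ -g\mathcal P(\widehat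 h)\widehat B_y\big)$ (semicolons separate $K$-blocks). When $\mathcal P(\widehat h)$ is invertible, $\widehat u=\mathcal P^{-1}(\widehat h)\widehat{q^x}$ and $\widehat v=\mathcal P^{-1}(\widehat h)\widehat{q^y}$. An entropy flux pair for a balance law $U_t+F_x+G_y=S$ is a triple $(E,H,K)$ of scalar functions with $E$ convex in the state such that smooth solutions satisfy $E_t+H_x+K_y=0$. *)

From HB Require Import structures.
From mathcomp Require Import all_boot all_order all_algebra.
From mathcomp Require Import all_classical all_reals all_analysis.
Set Implicit Arguments. Unset Strict Implicit. Unset Printing Implicit Defensive.
Import Order.TTheory GRing.Theory Num.Theory.
Import numFieldNormedType.Exports.
Local Open Scope classical_set_scope.
Local Open Scope ring_scope.

Section Defs.
Variable R : realType.

(** For nonnegative measurable f this is the d-dimensional Lebesgue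
    integral (Tonelli). *)
Fixpoint iter_lebesgue_integral (n : nat) : (n.-tuple R -> \bar R) -> \bar R :=
  match n with
  | 0 => fun f => f [tuple]
  | n'.+1 => fun f =>
      (\int[@lebesgue_measure R]_x
          iter_lebesgue_integral (fun t : n'.-tuple R => f [tuple of x :: t]))%E
  end.

Definition has_density dT (T : measurableType dT) (P : probability T R)
    (d : nat) (xi : T -> d.-tuple R) (rho : d.-tuple R -> R) : Prop :=
  (forall t, 0 <= rho t) /\
  forall A : set (d.-tuple R), measurable A ->
    P (xi @^-1` A) =
    iter_lebesgue_integral (fun t => ((\1_A t : R) * rho t)%:E).

Definition finite_moments dT (T : measurableType dT) (P : probability T R)
    (d : nat) (xi : T -> d.-tuple R) : Prop :=
  forall (i : 'I_d) (n : nat),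
    ('E_P[fun w => (`|tnth (xi w) i| ^+ n)%R] < +oo)%E.

Definition is_polyfun (d : nat) (f : d.-tuple R -> R) : Prop :=
  exists s : seq (R * ('I_d -> nat)),
    forall t, f t = \sum_(p <- s) p.1 * \prod_(i < d) tnth t i ^+ p.2 i.

Definition Mk dT (T : measurableType dT) (P : probability T R)
    (d K : nat) (xi : T -> d.-tuple R) (phi : 'I_K -> d.-tuple R -> R)
    (k : 'I_K) : 'M[R]_K :=
  \matrix_(l < K, m < K)
    fine ('E_P[fun w => (phi k (xi w) * phi l (xi w) * phi m (xi w))%R])%E.

Variable K : nat.

Definition Pmat (M : 'I_K -> 'M[R]_K) (z : 'cV[R]_K) : 'M[R]_K :=
  \sum_(k < K) z k 0 *: M k.

Definition dotv (a b : 'cV[R]_K) : R := (a^T *m b) 0 0.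

Definition posdef (A : 'M[R]_K) : Prop :=
  forall v : 'cV[R]_K, v != 0 -> 0 < (v^T *m A *m v) 0 0.

Variables (M : 'I_K -> 'M[R]_K) (g : R).

Definition SGu (h qx : 'cV[R]_K) : 'cV[R]_K := invmx (Pmat M h) *m qx.

Definition entropyE (h qx qy B : 'cV[R]_K) : R :=
  2^-1 * (dotv qx (SGu h qx) + dotv qy (SGu h qy))
  + 2^-1 * g * dotv h h + g * dotv h B.

Definition entropyH (h qx qy B : 'cV[R]_K) : R :=
  2^-1 * (dotv (SGu h qx) (Pmat M qx *m SGu h qx)
          + dotv (SGu h qy) (Pmat M qx *m SGu h qy))
  + g * dotv qx (h + B).

Definition entropyK (h qx qy B : 'cV[R]_K) : R :=
  2^-1 * (dotv (SGu h qy) (Pmat M qy *m SGu h qy)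
          + dotv (SGu h qx) (Pmat M qy *m SGu h qx))
  + g * dotv qy (h + B).

Definition flux_F_qx (h qx qy : 'cV[R]_K) : 'cV[R]_K :=
  Pmat M qx *m invmx (Pmat M h) *m qx + (2^-1 * g) *: (Pmat M h *m h).
Definition flux_F_qy (h qx qy : 'cV[R]_K) : 'cV[R]_K :=
  Pmat M qx *m invmx (Pmat M h) *m qy.
Definition flux_G_qx (h qx qy : 'cV[R]_K) : 'cV[R]_K :=
  Pmat M qy *m invmx (Pmat M h) *m qx.
Definition flux_G_qy (h qx qy : 'cV[R]_K) : 'cV[R]_K :=
  Pmat M qy *m invmx (Pmat M h) *m qy + (2^-1 * g) *: (Pmat M h *m h).

End Defs.

Section Partials.
Variables (R : realType) (V : normedModType R).
Definition pdx (f : R -> R -> R -> V) (x y t : R) : V := derive1 (fun s => f s y t) x.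
Definition pdy (f : R -> R -> R -> V) (x y t : R) : V := derive1 (fun s => f x s t) y.
Definition pdt (f : R -> R -> R -> V) (x y t : R) : V := derive1 (fun s => f x y s) t.
Definition pdx2 (f : R -> R -> V) (x y : R) : V := derive1 (fun s => f s y) x.
Definition pdy2 (f : R -> R -> V) (x y : R) : V := derive1 (fun s => f x s) y.
End Partials.

From HB Require Import structures.
From mathcomp Require Import all_boot all_order all_algebra.
From mathcomp Require Import all_classical all_reals all_analysis.
From mathcomp Require Import ring lra.
Import Order.TTheory GRing.Theory Num.Theory.
Import numFieldNormedType.Exports.
Local Open Scope ring_scope.

(* Convexity: apart from a convex quadratic and a linear term in h, E is
   1/2 (qx^T P(h)^-1 qx + qy^T P(h)^-1 qy) with P linear, and the matrix-fractional
   function (A, q) |-> q^T A^-1 q is jointly convex on positive definite matrices,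
   being the supremum over w of the affine functions 2 w^T q - w^T A w.

   Entropy equality: the triple products are symmetric, so P(h) is symmetric and
   P(a) b = P(b) a.  With u = P(h)^-1 qx and v = P(h)^-1 qy the chain rule gives
   E_t = u^T qx_t + v^T qy_t - 1/2 (u^T P(h_t) u + v^T P(h_t) v) + g (h + B)^T h_t,
   and substituting the SG equations for h_t, qx_t, qy_t cancels it against
   H_x + K_y term by term.  That u is differentiable at all follows from Cramer's
   rule, which makes the entries of P(h)^-1 rational functions of h. *)

Section Dotv.
Context {R : realType} {K : nat}.
Implicit Types (a b c : 'cV[R]_K) (A : 'M[R]_K).

Lemma dotvC a b : dotv a b = dotv b a.
Proof. by rewrite /dotv !mxE; apply: eq_bigr => i _; rewrite !mxE mulrC. Qed.

Lemma dotvDl a b c : dotv (a + b) c = dotv a c + dotv b c.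
Proof. by rewrite /dotv linearD mulmxDl mxE. Qed.

Lemma dotvDr a b c : dotv a (b + c) = dotv a b + dotv a c.
Proof. by rewrite /dotv mulmxDr mxE. Qed.

Lemma dotvZl k a b : dotv (k *: a) b = k * dotv a b.
Proof. by rewrite /dotv linearZ -scalemxAl mxE. Qed.

Lemma dotvZr k a b : dotv a (k *: b) = k * dotv a b.
Proof. by rewrite /dotv -scalemxAr mxE. Qed.

Lemma dotvNl a b : dotv (- a) b = - dotv a b.
Proof. by rewrite -scaleN1r dotvZl mulN1r. Qed.

Lemma dotvNr a b : dotv a (- b) = - dotv a b.
Proof. by rewrite -scaleN1r dotvZr mulN1r. Qed.

Lemma dotvBl a b c : dotv (a - b) c = dotv a c - dotv b c.
Proof. by rewrite dotvDl dotvNl. Qed.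

Lemma dotvBr a b c : dotv a (b - c) = dotv a b - dotv a c.
Proof. by rewrite dotvDr dotvNr. Qed.

Lemma dotv0r a : dotv a 0 = 0.
Proof. by rewrite /dotv mulmx0 mxE. Qed.

Lemma dotv_mulmxr A a b : dotv a (A *m b) = dotv (A^T *m a) b.
Proof. by rewrite /dotv trmx_mul trmxK mulmxA. Qed.

Lemma dotvv_ge0 a : 0 <= dotv a a.
Proof. by rewrite /dotv mxE; apply: sumr_ge0 => i _; rewrite mxE -expr2 sqr_ge0. Qed.

End Dotv.

Definition dotvE := (@dotvDl, @dotvDr, @dotvZl, @dotvZr, @dotvNl, @dotvNr, @dotv0r).

Definition symmetric_tensor {R : realType} {K : nat} (M : 'I_K -> 'M[R]_K) :=
  forall k l m, M k l m = M l k m /\ M k l m = M k m l.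

Lemma Mk_symmetric {R : realType} {dT : measure_display} {T : measurableType dT}
    (P : probability T R) {d K : nat} (xi : T -> d.-tuple R)
    (phi : 'I_K -> d.-tuple R -> R) : symmetric_tensor (Mk P xi phi).
Proof.
by move=> k l m; rewrite !mxE; split; congr (fine 'E_P[_])%E; apply: funext => w; ring.
Qed.

Section SymmetricTensor.
Context {R : realType} {K : nat} {M : 'I_K -> 'M[R]_K}.
Implicit Types (a b c : 'cV[R]_K).

Lemma PmatD a b : Pmat M (a + b) = Pmat M a + Pmat M b.
Proof. by rewrite /Pmat -big_split; apply: eq_bigr => k _; rewrite mxE scalerDl. Qed.

Lemma PmatZ k a : Pmat M (k *: a) = k *: Pmat M a.
Proof. by rewrite /Pmat scaler_sumr; apply: eq_bigr => i _; rewrite mxE scalerA. Qed.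

Lemma PmatN a : Pmat M (- a) = - Pmat M a.
Proof. by rewrite -scaleN1r PmatZ scaleN1r. Qed.

Hypothesis Msym : symmetric_tensor M.

Lemma trmx_Pmat a : (Pmat M a)^T = Pmat M a.
Proof.
apply/matrixP => i j; rewrite !mxE /Pmat !summxE.
by apply: eq_bigr => k _; rewrite !mxE (proj2 (Msym k i j)).
Qed.

Lemma Pmat_mulmxC a b : Pmat M a *m b = Pmat M b *m a.
Proof.
apply/matrixP => i j; rewrite !mxE.
under eq_bigr do rewrite /Pmat summxE big_distrl.
under [RHS]eq_bigr do rewrite /Pmat summxE big_distrl.
rewrite exchange_big; apply: eq_bigr => k _; apply: eq_bigr => l _; rewrite !mxE.
have -> : j = 0 by apply/val_inj; case: j => [[]].
rewrite (proj1 (Msym k i l)) (proj2 (Msym i k l)) -(proj1 (Msym l i k)) /=; ring.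
Qed.

Lemma dotv_Pmat a b c : dotv a (Pmat M b *m c) = dotv c (Pmat M b *m a).
Proof. by rewrite dotv_mulmxr trmx_Pmat dotvC. Qed.

Lemma dotv_SGu h q w : Pmat M h \in unitmx ->
  dotv (SGu M h q) (Pmat M h *m w) = dotv q w.
Proof. by move=> hP; rewrite dotv_Pmat dotvC /SGu mulKVmx. Qed.

End SymmetricTensor.

Section PositiveDefinite.
Context {R : realType} {K : nat}.
Implicit Types (A : 'M[R]_K) (q w : 'cV[R]_K).

Lemma posdef_unitmx {A} : posdef A -> A \in unitmx.
Proof.
move=> pA; rewrite unitmxE unitfE; apply/negP => /det0P [v v_neq0 vA].
have vT_neq0 : v^T != 0 by rewrite -trmx0 (inj_eq trmx_inj).
by have := pA _ vT_neq0; rewrite trmxK vA mul0mx mxE ltxx.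
Qed.

Lemma posdef_dotv_ge0 {A} w : posdef A -> 0 <= dotv w (A *m w).
Proof.
move=> pA; rewrite /dotv mulmxA; have [->|w_neq0] := eqVneq w 0.
  by rewrite mulmx0 mxE.
exact/ltW/pA.
Qed.

Lemma posdef_convex {A1 A2 lam} : posdef A1 -> posdef A2 -> 0 <= lam <= 1 ->
  posdef (lam *: A1 + (1 - lam) *: A2).
Proof.
move=> p1 p2 /andP[lam_ge0 lam_le1] v v_neq0.
have -> : (v^T *m (lam *: A1 + (1 - lam) *: A2) *m v) 0 0 =
    lam * (v^T *m A1 *m v) 0 0 + (1 - lam) * (v^T *m A2 *m v) 0 0.
  by rewrite mulmxDr mulmxDl -!scalemxAr -!scalemxAl !mxE.
have := p1 v v_neq0; have := p2 v v_neq0; nra.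
Qed.

(* Completing the square in [w] around the minimiser [A^-1 q]. *)
Lemma dotv_invmx_ge {A} q w : posdef A -> A^T = A ->
  2 * dotv w q - dotv w (A *m w) <= dotv q (invmx A *m q).
Proof.
move=> pA sA; have uA := posdef_unitmx pA.
have := posdef_dotv_ge0 (w - invmx A *m q) pA.
rewrite mulmxBr mulKVmx // !(dotvBl, dotvBr).
rewrite [dotv (invmx A *m q) (A *m w)]dotv_mulmxr sA mulKVmx //.
rewrite [dotv (invmx A *m q) q]dotvC [dotv q w]dotvC; lra.
Qed.

Lemma invmx_form_convex {A1 A2} q1 q2 {lam} :
  posdef A1 -> posdef A2 -> A1^T = A1 -> A2^T = A2 -> 0 <= lam <= 1 ->
  dotv (lam *: q1 + (1 - lam) *: q2)
       (invmx (lam *: A1 + (1 - lam) *: A2) *m (lam *: q1 + (1 - lam) *: q2))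
    <= lam * dotv q1 (invmx A1 *m q1) + (1 - lam) * dotv q2 (invmx A2 *m q2).
Proof.
move=> p1 p2 s1 s2 lam01; have /andP[lam_ge0 lam_le1] := lam01.
have uA := posdef_unitmx (posdef_convex p1 p2 lam01).
set A := lam *: A1 + _ in uA *; set q := lam *: q1 + _.
pose w := invmx A *m q.
have -> : dotv q (invmx A *m q) = 2 * dotv w q - dotv w (A *m w).
  by rewrite /w mulKVmx // dotvC; lra.
rewrite /q /A mulmxDl -!scalemxAl !dotvE.
have b1 := ler_wpM2l lam_ge0 (dotv_invmx_ge q1 w p1 s1).
have lam1_ge0 : 0 <= 1 - lam by rewrite subr_ge0.
have b2 := ler_wpM2l lam1_ge0 (dotv_invmx_ge q2 w p2 s2).
lra.
Qed.

End PositiveDefinite.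

Lemma entropyE_convex {R : realType} {K : nat} {M : 'I_K -> 'M[R]_K} {g : R} :
  symmetric_tensor M -> 0 <= g ->
  forall (B h1 qx1 qy1 h2 qx2 qy2 : 'cV[R]_K) (lam : R),
  posdef (Pmat M h1) -> posdef (Pmat M h2) -> 0 <= lam <= 1 ->
  entropyE M g (lam *: h1 + (1 - lam) *: h2) (lam *: qx1 + (1 - lam) *: qx2)
    (lam *: qy1 + (1 - lam) *: qy2) B
  <= lam * entropyE M g h1 qx1 qy1 B + (1 - lam) * entropyE M g h2 qx2 qy2 B.
Proof.
move=> Msym g_ge0 B h1 qx1 qy1 h2 qx2 qy2 lam p1 p2 lam01; have /andP[lam_ge0 lam_le1] := lam01.
rewrite /entropyE /SGu PmatD !PmatZ.
have cx := invmx_form_convex qx1 qx2 p1 p2 (trmx_Pmat Msym _) (trmx_Pmat Msym _) lam01.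
have cy := invmx_form_convex qy1 qy2 p1 p2 (trmx_Pmat Msym _) (trmx_Pmat Msym _) lam01.
have quad : dotv (lam *: h1 + (1 - lam) *: h2) (lam *: h1 + (1 - lam) *: h2) =
    lam * dotv h1 h1 + (1 - lam) * dotv h2 h2
    - lam * (1 - lam) * dotv (h1 - h2) (h1 - h2).
  by rewrite !dotvE [dotv h2 h1]dotvC; ring.
have defect_ge0 : 0 <= g * (lam * (1 - lam) * dotv (h1 - h2) (h1 - h2)).
  by rewrite !mulr_ge0 ?dotvv_ge0 ?subr_ge0.
have lin : dotv (lam *: h1 + (1 - lam) *: h2) B = lam * dotv h1 B + (1 - lam) * dotv h2 B.
  by rewrite !dotvE.
rewrite quad lin; lra.
Qed.

Section EntropyFluxBalance.
Context {R : realType} {K : nat}.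
Variables (M : 'I_K -> 'M[R]_K) (g : R).

(* Derivatives of u = SGu h qx, E, H, F_qx and F_qy along (dh, dqx, dqy, dB);
   K, G_qx and G_qy are H, F_qy and F_qx with qx and qy exchanged. *)
Definition SGu_deriv (h q dh dq : 'cV[R]_K) : 'cV[R]_K :=
  invmx (Pmat M h) *m (dq - Pmat M dh *m SGu M h q).

Definition entropyE_deriv (h qx qy B dh dqx dqy dB : 'cV[R]_K) : R :=
  dotv (SGu M h qx) dqx + dotv (SGu M h qy) dqy
  - 2^-1 * (dotv (SGu M h qx) (Pmat M dh *m SGu M h qx)
            + dotv (SGu M h qy) (Pmat M dh *m SGu M h qy))
  + g * dotv dh (h + B) + g * dotv h dB.

Definition entropyH_deriv (h qx qy B dh dqx dqy dB : 'cV[R]_K) : R :=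
  2^-1 * (dotv (SGu M h qx) (Pmat M dqx *m SGu M h qx)
          + dotv (SGu M h qy) (Pmat M dqx *m SGu M h qy))
  + dotv (SGu M h qx) (Pmat M qx *m SGu_deriv h qx dh dqx)
  + dotv (SGu M h qy) (Pmat M qx *m SGu_deriv h qy dh dqy)
  + g * dotv dqx (h + B) + g * dotv qx (dh + dB).

Definition flux_F_qx_deriv (h qx dh dqx : 'cV[R]_K) : 'cV[R]_K :=
  Pmat M dqx *m SGu M h qx + Pmat M qx *m SGu_deriv h qx dh dqx + g *: (Pmat M h *m dh).

Definition flux_F_qy_deriv (h qx qy dh dqx dqy : 'cV[R]_K) : 'cV[R]_K :=
  Pmat M dqx *m SGu M h qy + Pmat M qx *m SGu_deriv h qy dh dqy.

Hypothesis Msym : symmetric_tensor M.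

Lemma dotv_SGu_deriv h q dh dq : Pmat M h \in unitmx ->
  dotv q (SGu_deriv h q dh dq)
  = dotv (SGu M h q) dq - dotv (SGu M h q) (Pmat M dh *m SGu M h q).
Proof.
by move=> hP; rewrite /SGu_deriv [LHS]dotv_mulmxr trmx_inv trmx_Pmat // dotvBr.
Qed.

(* The kinetic terms cancel pairwise, the gravity terms after u^T P(h) w = qx^T w. *)
Lemma entropy_flux_balance {h qx qy B ht qxt qyt hx qxx qyx Bx hy qxy qyy By : 'cV[R]_K} :
  Pmat M h \in unitmx ->
  ht + qxx + qyy = 0 ->
  qxt + flux_F_qx_deriv h qx hx qxx + flux_F_qy_deriv h qy qx hy qyy qxy
    = - g *: (Pmat M h *m Bx) ->
  qyt + flux_F_qy_deriv h qx qy hx qxx qyx + flux_F_qx_deriv h qy hy qyy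
    = - g *: (Pmat M h *m By) ->
  entropyE_deriv h qx qy B ht qxt qyt 0 + entropyH_deriv h qx qy B hx qxx qyx Bx
  + entropyH_deriv h qy qx B hy qyy qxy By = 0.
Proof.
move=> hP mass momx momy.
have htE : ht = - qxx - qyy by apply/eqP; rewrite -opprD -addr_eq0 addrA mass.
have qxtE : qxt = - g *: (Pmat M h *m Bx) - flux_F_qy_deriv h qy qx hy qyy qxy
                  - flux_F_qx_deriv h qx hx qxx by rewrite -momx !addrK.
have qytE : qyt = - g *: (Pmat M h *m By) - flux_F_qx_deriv h qy hy qyy
                  - flux_F_qy_deriv h qx qy hx qxx qyx by rewrite -momy !addrK.
rewrite /entropyE_deriv /entropyH_deriv htE qxtE qytE /flux_F_qx_deriv /flux_F_qy_deriv.
rewrite !(PmatD, PmatN, mulmxDl, mulNmx, dotvE, dotvBr) !dotv_SGu //.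
lra.
Qed.

End EntropyFluxBalance.

Section MatrixDerivatives.
Context {R : realType} {s : R}.

Lemma derivable_big {I : Type} (r : seq I) (F : I -> R -> R) :
  (forall i, derivable (F i) s 1) -> derivable (fun x => \sum_(i <- r) F i x) s 1.
Proof.
move=> DF; elim: r => [|i r IH].
  rewrite (_ : (fun x => _) = cst 0); first exact: derivable_cst.
  by apply/funext => x; rewrite big_nil.
rewrite (_ : (fun x => _) = fun x => F i x + \sum_(j <- r) F j x).
  exact: derivableD (DF i) IH.
by apply/funext => x; rewrite big_cons.
Qed.

Lemma derivable_prod {I : Type} (r : seq I) (F : I -> R -> R) :
  (forall i, derivable (F i) s 1) -> derivable (fun x => \prod_(i <- r) F i x) s 1.
Proof.
move=> DF; elim: r => [|i r IH].
  rewrite (_ : (fun x => _) = cst 1); first exact: derivable_cst.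
  by apply/funext => x; rewrite big_nil.
rewrite (_ : (fun x => _) = fun x => F i x * \prod_(j <- r) F j x).
  exact: derivableM (DF i) IH.
by apply/funext => x; rewrite big_cons.
Qed.

Lemma is_derive_mul {f g : R -> R} {df dg : R} :
  is_derive s 1 f df -> is_derive s 1 g dg ->
  is_derive s 1 (fun x => f x * g x) (df * g s + f s * dg).
Proof.
move=> Df Dg; apply: (is_derive_eq (is_deriveM Df Dg)).
by rewrite addrC [_ *: df]mulrC.
Qed.

Lemma is_deriveMl (k : R) {f : R -> R} {df : R} :
  is_derive s 1 f df -> is_derive s 1 (fun x => k * f x) (k * df).
Proof.
move=> Df; apply: (is_derive_eq (is_derive_mul (is_derive_cst k s 1) Df)).
by rewrite mul0r add0r.
Qed.

Lemma is_derive_mxP {m n} (F : R -> 'M[R]_(m, n)) (dF : 'M[R]_(m, n)) :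
  is_derive s 1 F dF <-> forall i j, is_derive s 1 (fun x => F x i j) (dF i j).
Proof.
split=> [[DF <-] i j|DF].
  have Dij := (derivable_mxP F s 1).1 DF i j.
  by apply: DeriveDef => //; rewrite derive_mx // mxE.
have DF1 : derivable F s 1 by apply/derivable_mxP => i j; case: (DF i j).
apply: DeriveDef => //; rewrite derive_mx //; apply/matrixP => i j; rewrite mxE.
by case: (DF i j).
Qed.

Lemma is_derive_mulmx {m n p} {F : R -> 'M[R]_(m, n)} {G : R -> 'M[R]_(n, p)} {dF dG} :
  is_derive s 1 F dF -> is_derive s 1 G dG ->
  is_derive s 1 (fun x => F x *m G x) (dF *m G s + F s *m dG).
Proof.
move=> /is_derive_mxP DF /is_derive_mxP DG; apply/is_derive_mxP => i j.
rewrite (_ : (fun x => _) = fun x => \sum_k F x i k * G x k j); last first.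
  by apply: funext => x; rewrite mxE.
rewrite !mxE -big_split -fct_sumE; apply: is_derive_sum => k; exact: is_derive_mul.
Qed.

Lemma is_derive_trmx {m n} {F : R -> 'M[R]_(m, n)} {dF} :
  is_derive s 1 F dF -> is_derive s 1 (fun x => (F x)^T) dF^T.
Proof.
move=> /is_derive_mxP DF; apply/is_derive_mxP => i j.
rewrite (_ : (fun x => _) = fun x => F x j i); last by apply: funext => x; rewrite mxE.
by rewrite mxE.
Qed.

Lemma is_derive_dotv {K} {F G : R -> 'cV[R]_K} {dF dG} :
  is_derive s 1 F dF -> is_derive s 1 G dG ->
  is_derive s 1 (fun x => dotv (F x) (G x)) (dotv dF (G s) + dotv (F s) dG).
Proof.
move=> DF DG.
have -> : dotv dF (G s) + dotv (F s) dG = (dF^T *m G s + (F s)^T *m dG) 0 0 by rewrite mxE.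
exact: (is_derive_mxP _ _).1 (is_derive_mulmx (is_derive_trmx DF) DG) 0 0.
Qed.

Lemma is_derive_Pmat {K} (M : 'I_K -> 'M[R]_K) {F : R -> 'cV[R]_K} {dF} :
  is_derive s 1 F dF -> is_derive s 1 (fun x => Pmat M (F x)) (Pmat M dF).
Proof.
move=> /is_derive_mxP DF; apply/is_derive_mxP => i j.
rewrite (_ : (fun x => _) = fun x => \sum_k M k i j * F x k 0); last first.
  by apply: funext => x; rewrite summxE; apply: eq_bigr => k _; rewrite mxE mulrC.
rewrite summxE; under eq_bigr do rewrite mxE mulrC.
rewrite -fct_sumE; apply: is_derive_sum => k; exact: is_deriveMl.
Qed.

Lemma derivable_det {n} (F : R -> 'M[R]_n) :
  (forall i j, derivable (fun x => F x i j) s 1) -> derivable (fun x => \det (F x)) s 1.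
Proof.
move=> DF; apply: derivable_big => sg.
apply: derivableM; [exact: derivable_cst | exact: derivable_prod].
Qed.

Lemma derivable_invmx {n} (F : R -> 'M[R]_n) i j :
  (forall x, F x \in unitmx) -> (forall i j, derivable (fun x => F x i j) s 1) ->
  derivable (fun x => invmx (F x) i j) s 1.
Proof.
move=> Funit DF.
rewrite (_ : (fun x => _) = fun x => (\det (F x))^-1 * \adj (F x) i j); last first.
  by apply: funext => x; rewrite /invmx Funit mxE.
apply: derivableM.
  apply: derivableV; last exact: derivable_det.
  by rewrite -unitfE -unitmxE.
rewrite (_ : (fun x => _) = fun x => (-1) ^+ (j + i) * \det (row' j (col' i (F x)))).
  apply: derivableM; first exact: derivable_cst.
  apply: derivable_det => a b.
  rewrite (_ : (fun x => _) = fun x => F x (lift j a) (lift i b)) //.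
  by apply: funext => x; rewrite !mxE.
by apply: funext => x; rewrite mxE.
Qed.

End MatrixDerivatives.

Section SGDerivatives.
Context {R : realType} {K : nat}.
Variables (M : 'I_K -> 'M[R]_K) (g : R).
Context {s : R} {h q1 q2 B : R -> 'cV[R]_K} {dh dq1 dq2 dB : 'cV[R]_K}.
Hypothesis Msym : symmetric_tensor M.
Hypotheses (Dh : is_derive s 1 h dh) (Dq1 : is_derive s 1 q1 dq1).
Hypotheses (Dq2 : is_derive s 1 q2 dq2) (DB : is_derive s 1 B dB).
Hypothesis h_unit : forall x, Pmat M (h x) \in unitmx.

Lemma is_derive_SGu {q dq} : is_derive s 1 q dq ->
  is_derive s 1 (fun x => SGu M (h x) (q x)) (SGu_deriv M (h s) (q s) dh dq).
Proof.
move=> Dq; have DP := is_derive_Pmat M Dh.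
have Du : derivable (fun x => SGu M (h x) (q x)) s 1.
  have [/derivable_mxP q_derivable _] := Dq; have [/derivable_mxP P_derivable _] := DP.
  apply/derivable_mxP => i j.
  rewrite (_ : (fun x => _) = fun x => \sum_k invmx (Pmat M (h x)) i k * q x k j); last first.
    by apply: funext => x; rewrite mxE.
  rewrite -fct_sumE; apply: derivable_sum => k.
  by apply: derivableM; [exact: derivable_invmx | exact: q_derivable].
(* Differentiate [P(h) u = q] and solve for the derivative of [u]. *)
have := is_derive_mulmx DP (derivableP Du).
have -> : (fun x => Pmat M (h x) *m SGu M (h x) (q x)) = q.
  by apply: funext => x; rewrite /SGu mulKVmx.
case=> _; have [_ ->] := Dq => dqE.
by apply: DeriveDef => //; rewrite /SGu_deriv dqE addrAC subrr add0r mulKmx.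
Qed.

Lemma is_derive_entropyE :
  is_derive s 1 (fun x => entropyE M g (h x) (q1 x) (q2 x) (B x))
    (entropyE_deriv M g (h s) (q1 s) (q2 s) (B s) dh dq1 dq2 dB).
Proof.
have Du1 := is_derive_SGu Dq1; have Du2 := is_derive_SGu Dq2.
apply: (is_derive_eq (is_deriveD (is_deriveD
  (is_deriveMl _ (is_deriveD (is_derive_dotv Dq1 Du1) (is_derive_dotv Dq2 Du2)))
  (is_deriveMl _ (is_derive_dotv Dh Dh))) (is_deriveMl _ (is_derive_dotv Dh DB)))).
rewrite /entropyE_deriv !dotv_SGu_deriv // !dotvDr.
rewrite [dotv dq1 _]dotvC [dotv dq2 _]dotvC [dotv dh (h s)]dotvC [dotv dh (B s)]dotvC.
lra.
Qed.

Lemma is_derive_entropyH :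
  is_derive s 1 (fun x => entropyH M g (h x) (q1 x) (q2 x) (B x))
    (entropyH_deriv M g (h s) (q1 s) (q2 s) (B s) dh dq1 dq2 dB).
Proof.
have Du1 := is_derive_SGu Dq1; have Du2 := is_derive_SGu Dq2.
have DP1 := is_derive_Pmat M Dq1.
apply: (is_derive_eq (is_deriveD (is_deriveMl _ (is_deriveD
  (is_derive_dotv Du1 (is_derive_mulmx DP1 Du1)) (is_derive_dotv Du2 (is_derive_mulmx DP1 Du2))))
  (is_deriveMl _ (is_derive_dotv Dq1 (is_deriveD Dh DB))))).
rewrite /entropyH_deriv /= !dotvDr.
rewrite [dotv (SGu_deriv _ _ _ dh dq1) _]dotv_Pmat // [dotv (SGu_deriv _ _ _ dh dq2) _]dotv_Pmat //.
lra.
Qed.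

Lemma is_derive_flux_F_qx :
  is_derive s 1 (fun x => flux_F_qx M g (h x) (q1 x) (q2 x))
    (flux_F_qx_deriv M g (h s) (q1 s) dh dq1).
Proof.
have Du1 := is_derive_SGu Dq1.
have DP1 := is_derive_Pmat M Dq1; have DPh := is_derive_Pmat M Dh.
rewrite (_ : (fun x => _) = fun x => Pmat M (q1 x) *m SGu M (h x) (q1 x)
   + (2^-1 * g) *: (Pmat M (h x) *m h x)); last first.
  by apply: funext => x; rewrite /flux_F_qx /SGu mulmxA.
apply: (is_derive_eq (is_deriveD (is_derive_mulmx DP1 Du1)
  (is_deriveZ _ (is_derive_mulmx DPh Dh)))).
rewrite /flux_F_qx_deriv (Pmat_mulmxC Msym dh) scalerDr -scalerDl.
by congr (_ + _ *: _); lra.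
Qed.

Lemma is_derive_flux_F_qy :
  is_derive s 1 (fun x => flux_F_qy M (h x) (q1 x) (q2 x))
    (flux_F_qy_deriv M (h s) (q1 s) (q2 s) dh dq1 dq2).
Proof.
have Du2 := is_derive_SGu Dq2; have DP1 := is_derive_Pmat M Dq1.
rewrite (_ : (fun x => _) = fun x => Pmat M (q1 x) *m SGu M (h x) (q2 x)).
  exact: is_derive_mulmx DP1 Du2.
by apply: funext => x; rewrite /flux_F_qy /SGu mulmxA.
Qed.

End SGDerivatives.

Section PartialDerivatives.
Context {R : realType} {V : normedModType R}.

Lemma derive1_val {F : R -> V} {s : R} {dF : V} : is_derive s 1 F dF -> derive1 F s = dF.
Proof. by case=> _ <-; rewrite derive1E. Qed.

Lemma is_derive_along {W : normedModType R} {F : W -> V} {c : R -> W} {s : R} :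
  differentiable c s -> differentiable F (c s) -> is_derive s 1 (F \o c) (derive1 (F \o c) s).
Proof.
move=> dc dF; rewrite derive1E; apply: derivableP; apply/derivable1_diffP.
exact: differentiable_comp.
Qed.

Context {f : R -> R -> R -> V} {f2 : R -> R -> V}.
Hypothesis df : forall p : R * R * R, differentiable (fun p : R * R * R => f p.1.1 p.1.2 p.2) p.
Hypothesis df2 : forall p : R * R, differentiable (fun p : R * R => f2 p.1 p.2) p.
Variables x y t : R.

Lemma is_derive_pdx : is_derive x 1 (fun s => f s y t) (pdx f x y t).
Proof.
have dc : differentiable (fun s : R => (s, y, t)) x
  by do ![apply: differentiable_pair | exact: differentiable_cst | exact: ex_diff].
exact: is_derive_along dc (df _).
Qed.

Lemma is_derive_pdy : is_derive y 1 (fun s => f x s t) (pdy f x y t).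
Proof.
have dc : differentiable (fun s : R => (x, s, t)) y
  by do ![apply: differentiable_pair | exact: differentiable_cst | exact: ex_diff].
exact: is_derive_along dc (df _).
Qed.

Lemma is_derive_pdt : is_derive t 1 (fun s => f x y s) (pdt f x y t).
Proof.
have dc : differentiable (fun s : R => (x, y, s)) t
  by do ![apply: differentiable_pair | exact: differentiable_cst | exact: ex_diff].
exact: is_derive_along dc (df _).
Qed.

Lemma is_derive_pdx2 : is_derive x 1 (fun s => f2 s y) (pdx2 f2 x y).
Proof.
have dc : differentiable (fun s : R => (s, y)) x
  by do ![apply: differentiable_pair | exact: differentiable_cst | exact: ex_diff].
exact: is_derive_along dc (df2 _).
Qed.

Lemma is_derive_pdy2 : is_derive y 1 (fun s => f2 x s) (pdy2 f2 x y).
Proof.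
have dc : differentiable (fun s : R => (x, s)) y
  by do ![apply: differentiable_pair | exact: differentiable_cst | exact: ex_diff].
exact: is_derive_along dc (df2 _).
Qed.

End PartialDerivatives.

Section SmoothState.
Context {R : realType} {K : nat}.
Variables (M : 'I_K -> 'M[R]_K) (g : R).
Variables (h qx qy : R -> R -> R -> 'cV[R]_K) (B : R -> R -> 'cV[R]_K).
Hypothesis Msym : symmetric_tensor M.
Hypothesis dh : forall p : R * R * R, differentiable (fun p : R * R * R => h p.1.1 p.1.2 p.2) p.
Hypothesis dqx : forall p : R * R * R, differentiable (fun p : R * R * R => qx p.1.1 p.1.2 p.2) p.
Hypothesis dqy : forall p : R * R * R, differentiable (fun p : R * R * R => qy p.1.1 p.1.2 p.2) p.
Hypothesis dB : forall p : R * R, differentiable (fun p : R * R => B p.1 p.2) p.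
Hypothesis h_unit : forall x y t, Pmat M (h x y t) \in unitmx.
Variables x y t : R.

Lemma pdt_entropyE :
  pdt (fun x y t => entropyE M g (h x y t) (qx x y t) (qy x y t) (B x y)) x y t
  = entropyE_deriv M g (h x y t) (qx x y t) (qy x y t) (B x y)
      (pdt h x y t) (pdt qx x y t) (pdt qy x y t) 0.
Proof.
exact: derive1_val (is_derive_entropyE M g Msym (is_derive_pdt dh x y t)
  (is_derive_pdt dqx x y t) (is_derive_pdt dqy x y t) (is_derive_cst (B x y) t 1)
  (h_unit x y)).
Qed.

Lemma pdx_entropyH :
  pdx (fun x y t => entropyH M g (h x y t) (qx x y t) (qy x y t) (B x y)) x y t
  = entropyH_deriv M g (h x y t) (qx x y t) (qy x y t) (B x y)
      (pdx h x y t) (pdx qx x y t) (pdx qy x y t) (pdx2 B x y).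
Proof.
exact: derive1_val (is_derive_entropyH M g Msym (is_derive_pdx dh x y t)
  (is_derive_pdx dqx x y t) (is_derive_pdx dqy x y t) (is_derive_pdx2 dB x y)
  (fun s => h_unit s y t)).
Qed.

Lemma pdy_entropyK :
  pdy (fun x y t => entropyK M g (h x y t) (qx x y t) (qy x y t) (B x y)) x y t
  = entropyH_deriv M g (h x y t) (qy x y t) (qx x y t) (B x y)
      (pdy h x y t) (pdy qy x y t) (pdy qx x y t) (pdy2 B x y).
Proof.
exact: derive1_val (is_derive_entropyH M g Msym (is_derive_pdy dh x y t)
  (is_derive_pdy dqy x y t) (is_derive_pdy dqx x y t) (is_derive_pdy2 dB x y)
  (fun s => h_unit x s t)).
Qed.

Lemma pdx_flux_F_qx :
  pdx (fun x y t => flux_F_qx M g (h x y t) (qx x y t) (qy x y t)) x y t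
  = flux_F_qx_deriv M g (h x y t) (qx x y t) (pdx h x y t) (pdx qx x y t).
Proof.
exact: derive1_val (is_derive_flux_F_qx M g Msym (is_derive_pdx dh x y t)
  (is_derive_pdx dqx x y t) (fun s => h_unit s y t)).
Qed.

Lemma pdx_flux_F_qy :
  pdx (fun x y t => flux_F_qy M (h x y t) (qx x y t) (qy x y t)) x y t
  = flux_F_qy_deriv M (h x y t) (qx x y t) (qy x y t) (pdx h x y t) (pdx qx x y t) (pdx qy x y t).
Proof.
exact: derive1_val (is_derive_flux_F_qy M (is_derive_pdx dh x y t)
  (is_derive_pdx dqx x y t) (is_derive_pdx dqy x y t)
  (fun s => h_unit s y t)).
Qed.

Lemma pdy_flux_G_qx :
  pdy (fun x y t => flux_G_qx M (h x y t) (qx x y t) (qy x y t)) x y t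
  = flux_F_qy_deriv M (h x y t) (qy x y t) (qx x y t) (pdy h x y t) (pdy qy x y t) (pdy qx x y t).
Proof.
exact: derive1_val (is_derive_flux_F_qy M (is_derive_pdy dh x y t)
  (is_derive_pdy dqy x y t) (is_derive_pdy dqx x y t)
  (fun s => h_unit x s t)).
Qed.

Lemma pdy_flux_G_qy :
  pdy (fun x y t => flux_G_qy M g (h x y t) (qx x y t) (qy x y t)) x y t
  = flux_F_qx_deriv M g (h x y t) (qy x y t) (pdy h x y t) (pdy qy x y t).
Proof.
apply: derive1_val.
exact: (is_derive_flux_F_qx M g (q2 := fun s => qx x s t) Msym (is_derive_pdy dh x y t)
  (is_derive_pdy dqy x y t) (fun s => h_unit x s t)).
Qed.

End SmoothState.

Theorem theorem3p1 (R : realType) (dT : measure_display) (T : measurableType dT)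
    (P : probability T R) (d : nat) (xi : T -> d.-tuple R)
    (rho : d.-tuple R -> R) (K : nat) (hK : (0 < K)%N)
    (phi : 'I_K -> d.-tuple R -> R) (g : R) :
  measurable_fun setT xi ->
  has_density P xi rho ->
  finite_moments P xi ->
  (forall k, is_polyfun (phi k)) ->
  (forall t, phi (Ordinal hK) t = 1) ->
  (forall k l : 'I_K,
     'E_P[fun w => (phi k (xi w) * phi l (xi w))%R] = ((k == l)%:R)%:E)%E ->
  0 < g ->
  let M := Mk P xi phi in
  (* (i) E is convex in U = (h, qx, qy) on the set where P(h) is positive definite *)
  (forall (B h1 qx1 qy1 h2 qx2 qy2 : 'cV[R]_K) (lam : R),
     posdef (Pmat M h1) -> posdef (Pmat M h2) -> 0 <= lam <= 1 ->
     entropyE M g (lam *: h1 + (1 - lam) *: h2) (lam *: qx1 + (1 - lam) *: qx2)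
       (lam *: qy1 + (1 - lam) *: qy2) B
     <= lam * entropyE M g h1 qx1 qy1 B + (1 - lam) * entropyE M g h2 qx2 qy2 B)
  /\
  (* (ii) every smooth solution with P(h) positive definite satisfies
          E_t + H_x + K_y = 0 *)
  (forall (h qx qy : R -> R -> R -> 'cV[R]_K) (B : R -> R -> 'cV[R]_K),
     (forall p : R * R * R, differentiable (fun p : R * R * R => h p.1.1 p.1.2 p.2) p) ->
     (forall p : R * R * R, differentiable (fun p : R * R * R => qx p.1.1 p.1.2 p.2) p) ->
     (forall p : R * R * R, differentiable (fun p : R * R * R => qy p.1.1 p.1.2 p.2) p) ->
     (forall p : R * R, differentiable (fun p : R * R => B p.1 p.2) p) ->
     (forall x y t, posdef (Pmat M (h x y t))) ->
     (forall x y t,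
        pdt h x y t + pdx qx x y t + pdy qy x y t = 0) ->
     (forall x y t,
        pdt qx x y t
        + pdx (fun x y t => flux_F_qx M g (h x y t) (qx x y t) (qy x y t)) x y t
        + pdy (fun x y t => flux_G_qx M (h x y t) (qx x y t) (qy x y t)) x y t
        = - g *: (Pmat M (h x y t) *m pdx2 B x y)) ->
     (forall x y t,
        pdt qy x y t
        + pdx (fun x y t => flux_F_qy M (h x y t) (qx x y t) (qy x y t)) x y t
        + pdy (fun x y t => flux_G_qy M g (h x y t) (qx x y t) (qy x y t)) x y t
        = - g *: (Pmat M (h x y t) *m pdy2 B x y)) ->
     forall x y t,
       pdt (fun x y t => entropyE M g (h x y t) (qx x y t) (qy x y t) (B x y)) x y t
       + pdx (fun x y t => entropyH M g (h x y t) (qx x y t) (qy x y t) (B x y)) x y t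
       + pdy (fun x y t => entropyK M g (h x y t) (qx x y t) (qy x y t) (B x y)) x y t
       = 0).
Proof.
move=> _ _ _ _ _ _ g_gt0 M; have Msym : symmetric_tensor M := Mk_symmetric P xi phi.
split; first exact: entropyE_convex Msym (ltW g_gt0).
move=> h qx qy B dh dqx dqy dB h_posdef mass momx momy x y t.
have h_unit x' y' t' : Pmat M (h x' y' t') \in unitmx := posdef_unitmx (h_posdef x' y' t').
have := momx x y t; have := momy x y t.
rewrite pdx_flux_F_qy // pdy_flux_G_qy // pdx_flux_F_qx // pdy_flux_G_qx // => momy' momx'.
rewrite pdt_entropyE // pdx_entropyH // pdy_entropyK //.
have balance := entropy_flux_balance _ _ Msym (h_unit x y t) (mass x y t) momx' momy'.
exact: balance.
Qed.
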